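(* Let $\mathcal{I}$ be a countable nonempty set of database instances, $\mathcal{L}$ a query language, and $p$ an instance-independent pricing function. The following are equivalent: (1) $p$ has no information arbitrage; (2) there is a function $f:\Pi^{\mathcal{L}}_{\mathcal{I}}\to\mathbb{R}_{\ge 0}$ that is monotone over $\Pi^{\mathcal{L}}_{\mathcal{I}}$ such that $p(\mathbf{Q})=f(\mathcal{P}_{\mathbf{Q}})$ for all $\mathbf{Q}\in B(\mathcal{L})$.
   Context: A query is a deterministic function on $\mathcal{I}$. A query bundle $\mathbf{Q}$ is a finite tuple of queries from $\mathcal{L}$, evaluated componentwise; $B(\mathcal{L})$ is the set of finite query bundles, closed under union (concatenation). An instance-independent pricing function assigns a price $p(\mathbf{Q})\ge 0$ to each $\mathbf{Q}\in B(\mathcal{L})$. $\mathbf{Q}_2\twoheadrightarrow\mathbf{Q}_1$ means: for all $D',D''\in\mathcal{I}$, $\mathbf{Q}_2(D')=\mathbf{Q}_2(D'')$ implies $\mathbf{Q}_1(D')=\mathbf{Q}_1(D'')$. $p$ has no information arbitrage if $\mathbf{Q}_2\twoheadrightarrow\mathbf{Q}_1$ implies $p(\mathbf{Q}_2)\ge p(\mathbf{Q}_1)$. $\mathcal{P}_{\mathbf{Q}}$ is the partition of $\mathcal{I}$ into the equivalence classes of $D\sim D'\iff \mathbf{Q}(D)=\mathbf{Q}(D')$. For partitions, $\mathcal{P}_1\succeq\mathcal{P}_2$ ($\mathcal{P}_1$ refines $\mathcal{P}_2$) if every block of $\mathcal{P}_1$ is contained in some block of $\mathcal{P}_2$. $\Pi^{\mathcal{L}}_{\mathcal{I}}=\{\mathcal{P}_{\mathbf{Q}}:\mathbf{Q}\in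 B(\mathcal{L})\}$, ordered by $\succeq$. $f$ is monotone over $\Pi^{\mathcal{L}}_{\mathcal{I}}$ if $\mathcal{P}_1\succeq\mathcal{P}_2$ implies $f(\mathcal{P}_1)\ge f(\mathcal{P}_2)$. *)

From Stdlib Require Import Reals List.
Import ListNotations.
Open Scope R_scope.

Set Implicit Arguments.

Definition eval_bundle {Inst Out : Type} (Q : list (Inst -> Out)) (D : Inst)
  : list Out := map (fun q => q D) Q.

Definition in_bundles {Inst Out : Type} (L : (Inst -> Out) -> Prop)
  (Q : list (Inst -> Out)) : Prop := Forall L Q.

Definition determines {Inst Out : Type} (Q2 Q1 : list (Inst -> Out)) : Prop :=
  forall D' D'' : Inst,
    eval_bundle Q2 D' = eval_bundle Q2 D'' -> eval_bundle Q1 D' = eval_bundle Q1 D''.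

(* Instance-independent pricing function p on B(L) (values of p outside
   B(L) are irrelevant); nonnegativity on B(L). *)
Definition pricing_function {Inst Out : Type} (L : (Inst -> Out) -> Prop)
  (p : list (Inst -> Out) -> R) : Prop :=
  forall Q, in_bundles L Q -> 0 <= p Q.

Definition no_information_arbitrage {Inst Out : Type}
  (L : (Inst -> Out) -> Prop) (p : list (Inst -> Out) -> R) : Prop :=
  forall Q1 Q2, in_bundles L Q1 -> in_bundles L Q2 ->
    determines Q2 Q1 -> p Q2 >= p Q1.

(* Partitions of Inst are represented as sets of blocks. *)
Definition partition_t (Inst : Type) := (Inst -> Prop) -> Prop.

Definition partition_of {Inst Out : Type} (Q : list (Inst -> Out)) : partition_t Inst :=
  fun B => exists D : Inst, B = (fun D' => eval_bundle Q D' = eval_bundle Q D).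

Definition refines {Inst : Type} (P1 P2 : partition_t Inst) : Prop :=
  forall B1, P1 B1 -> exists B2, P2 B2 /\ (forall x, B1 x -> B2 x).

Definition Pi_L {Inst Out : Type} (L : (Inst -> Out) -> Prop) (P : partition_t Inst) : Prop :=
  exists Q, in_bundles L Q /\ P = partition_of Q.

Definition monotone_over {Inst Out : Type} (L : (Inst -> Out) -> Prop)
  (f : partition_t Inst -> R) : Prop :=
  forall P1 P2, Pi_L L P1 -> Pi_L L P2 -> refines P1 P2 -> f P1 >= f P2.

Definition countable_type (T : Type) : Prop :=
  exists e : nat -> T, forall x : T, exists n, e n = x.

(* Two bundles determine one another exactly when they induce the same
   partition of the instances, and [Q2 ->> Q1] is refinement of the induced
   partitions.  Hence an arbitrage-free price is constant on bundles with the
   same partition and descends to a monotone function of partitions; the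
   converse is immediate. *)

From Stdlib Require Import Reals List.
From Stdlib Require Import ClassicalEpsilon.
Open Scope R_scope.

Section Partitions.

Context {Inst Out : Type}.
Implicit Types Q : list (Inst -> Out).

Lemma determines_iff_refines Q1 Q2 :
  determines Q2 Q1 <-> refines (partition_of Q2) (partition_of Q1).
Proof.
  split.
  - intros H B1 [D ->].
    exists (fun D' => eval_bundle Q1 D' = eval_bundle Q1 D). split.
    + exists D. reflexivity.
    + intros x Hx. exact (H x D Hx).
  - intros H D' D'' E.
    destruct (H (fun D => eval_bundle Q2 D = eval_bundle Q2 D''))
      as [B2 [[D ->] Hsub]].
    + exists D''. reflexivity.
    + rewrite (Hsub D' E), (Hsub D'' eq_refl). reflexivity.
Qed.

Lemma partition_of_eq_determines Q1 Q2 :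
  partition_of Q2 = partition_of Q1 -> determines Q2 Q1.
Proof.
  intros E. apply determines_iff_refines. rewrite E.
  intros B HB. exists B. auto.
Qed.

End Partitions.

Section PriceOfPartition.

Context {Inst Out : Type}.
Variable L : (Inst -> Out) -> Prop.
Variable p : list (Inst -> Out) -> R.

(* The price of some bundle in [B(L)] inducing [P]; the choice is arbitrary
   (and the value meaningless) when [P] is not in [Pi_L L]. *)
Definition price_of_partition (P : partition_t Inst) : R :=
  p (epsilon (inhabits nil) (fun Q => in_bundles L Q /\ P = partition_of Q)).

Lemma no_arbitrage_price_congr Q1 Q2 :
  no_information_arbitrage L p -> in_bundles L Q1 -> in_bundles L Q2 ->
  partition_of Q1 = partition_of Q2 -> p Q1 = p Q2.
Proof.
  intros NA H1 H2 E.
  apply Rle_antisym; apply Rge_le, NA; auto; apply partition_of_eq_determines;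
    auto.
Qed.

Lemma price_of_partition_of Q :
  no_information_arbitrage L p -> in_bundles L Q ->
  p Q = price_of_partition (partition_of Q).
Proof.
  intros NA HQ. unfold price_of_partition.
  destruct (epsilon_spec (inhabits nil)
              (fun Q' => in_bundles L Q' /\ partition_of Q = partition_of Q'))
    as [HQ' E].
  - exists Q. auto.
  - exact (no_arbitrage_price_congr _ _ NA HQ HQ' E).
Qed.

Lemma price_of_partition_monotone :
  no_information_arbitrage L p -> monotone_over L price_of_partition.
Proof.
  intros NA P1 P2 [Q1 [H1 ->]] [Q2 [H2 ->]] R12.
  rewrite <- !price_of_partition_of by auto.
  apply NA; auto. apply determines_iff_refines. exact R12.
Qed.

End PriceOfPartition.

Theorem theorem4 (Inst Out : Type) (Hcount : countable_type Inst)
  (Hne : inhabited Inst) (L : (Inst -> Out) -> Prop)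
  (p : list (Inst -> Out) -> R) (Hp : pricing_function L p) :
  no_information_arbitrage L p <->
  exists f : partition_t Inst -> R,
    (forall P, Pi_L L P -> 0 <= f P) /\
    monotone_over L f /\
    (forall Q, in_bundles L Q -> p Q = f (partition_of Q)).
Proof.
  split.
  - intros NA. exists (price_of_partition L p). split; [|split].
    + intros P [Q [HQ ->]]. rewrite <- price_of_partition_of; auto.
    + exact (price_of_partition_monotone L p NA).
    + intros Q HQ. exact (price_of_partition_of L p Q NA HQ).
  - intros [f [_ [Hmono Hf]]] Q1 Q2 H1 H2 D21.
    rewrite (Hf Q1 H1), (Hf Q2 H2).
    apply Hmono; [exists Q2 | exists Q1 | apply determines_iff_refines]; auto.
Qed.
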